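(* Define $a_n\langle B_n\rangle$, $n\ge0$, by \[ \sum_{n=0}^{\infty}\frac{a_n\langle B_n\rangle}{n!}\alpha^n=\frac{1}{1-\alpha}\exp\!\Big(\frac{1}{1-\alpha}-1\Big). \] Then for every $n\ge0$, \[ a_n\langle B_n\rangle=\sum_{k=0}^{n}|s(n,k)|\,B_{k+1}, \] where $B_m$ is the $m$-th Bell number and $|s(n,k)|$ is the unsigned Stirling number of the first kind.
   Context: $B_m$ is the number of partitions of an $m$-element set ($B_0=1,B_1=1,B_2=2,B_3=5,\dots$). $|s(n,k)|$ is the number of permutations of $n$ elements with exactly $k$ disjoint cycles, with $|s(0,0)|=1$ and $|s(n,0)|=0$ for $n\ge1$. *)

From mathcomp Require Import all_boot all_order all_algebra all_fingroup.
Set Implicit Arguments. Unset Strict Implicit. Unset Printing Implicit Defensive.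
Import GRing.Theory Num.Theory.
Local Open Scope ring_scope.

Definition fps := nat -> rat.

Definition fps_mul (f g : fps) : fps :=
  fun n => \sum_(i < n.+1) f i * g (n - i)%N.

Fixpoint fps_pow (f : fps) (j : nat) : fps :=
  match j with
  | O => fun n => if n == 0%N then 1 else 0
  | S j' => fps_mul f (fps_pow f j')
  end.

(* exp(f) = sum_{j>=0} f^j / j!, for f with zero constant term.  Since f^j
   has order >= j in that case, the coefficient of alpha^n only receives
   contributions from j <= n, so the formal sum is computed exactly by the
   truncation below. *)
Definition fps_exp (f : fps) : fps :=
  fun n => \sum_(j < n.+1) fps_pow f j n / (j`!)%:R.

Definition geom : fps := fun _ => 1.

(* 1/(1-alpha) - 1 *)
Definition geom_m1 : fps := fun n => if n == 0%N then 0 else 1.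

Definition aB (n : nat) : rat := (n`!)%:R * fps_mul geom (fps_exp geom_m1) n.

Definition bell (m : nat) : nat :=
  #|[set P : {set {set 'I_m}} | partition P [set: 'I_m]]|.

(* Unsigned Stirling number of the first kind: number of permutations of
   n elements with exactly k disjoint cycles (fixed points count as cycles). *)
Definition stirling1 (n k : nat) : nat :=
  #|[set s : 'S_n | #|porbits s| == k]|.

(* Both sides equal \sum_(j <= n) n!/j! * 'C(n, j).
   Left: 1/(1-a) - 1 = a/(1-a), whose j-th power has coefficients 'C(m-1, j-1),
   and multiplying by 1/(1-a) takes partial sums, so the coefficient of a^n is
   \sum_j 'C(n, j)/j!.
   Right: inserting a new point into a cycle shows
   \sum_k |s(n,k)| x^k = x (x+1) ... (x+n-1).  The linear form L : x^k |-> B_k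
   satisfies L(x p(x)) = L(p(x+1)) by the recurrence of Bell numbers, hence
   L(x (x-1) ... (x-j+1)) = 1 for all j.  So \sum_k |s(n,k)| B_(k+1) is
   L((x+1) ... (x+n)), and expanding this product in falling factorials gives
   the coefficients n!/j! * 'C(n, j). *)

From HB Require Import structures.
From mathcomp Require Import all_boot all_order all_algebra all_fingroup.
From mathcomp Require Import zify.
Set Implicit Arguments. Unset Strict Implicit. Unset Printing Implicit Defensive.
Import GRing.Theory Num.Theory.
Local Open Scope ring_scope.

Section CycleInsertion.
Variable n : nat.
Implicit Types (i : 'I_n.+1) (s : 'S_n) (x : 'I_n).

Lemma lift_permX i s k : (lift_perm i i s ^+ k = lift_perm i i (s ^+ k))%g.
Proof.
elim: k => [|k IHk]; first by rewrite !expg0 lift_perm1.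
by rewrite !expgS IHk lift_permM.
Qed.

Lemma porbit_lift_perm_id i s : porbit (lift_perm i i s) i = [set i].
Proof.
apply/setP => y; rewrite inE; apply/porbitP/eqP => [[k ->]|->].
  by rewrite lift_permX lift_perm_id.
by exists 0%N; rewrite expg0 perm1.
Qed.

Lemma porbit_lift_perm_lift i s x :
  porbit (lift_perm i i s) (lift i x) = lift i @: porbit s x.
Proof.
apply/setP => y; apply/porbitP/imsetP => [[k ->]|[z /porbitP [k ->] ->]].
  by exists ((s ^+ k)%g x); rewrite ?mem_porbit // lift_permX lift_perm_lift.
by exists k; rewrite lift_permX lift_perm_lift.
Qed.

Lemma porbits_lift_perm i s : porbits (lift_perm i i s) =
  [set i] |: [set lift i @: A | A : {set 'I_n} in porbits s].
Proof.
apply/setP => A; rewrite !inE; apply/imsetP/idP => [[y _ ->]|].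
  case: (unliftP i y) => [x ->|->].
    by rewrite porbit_lift_perm_lift !imset_f ?orbT.
  by rewrite porbit_lift_perm_id eqxx.
case/orP => [/eqP ->|/imsetP [B /imsetP [x _ ->] ->]].
  by exists i; rewrite ?porbit_lift_perm_id.
by exists (lift i x); rewrite ?porbit_lift_perm_lift.
Qed.

Lemma card_porbits_lift_perm i s : #|porbits (lift_perm i i s)| = #|porbits s|.+1.
Proof.
rewrite porbits_lift_perm cardsU1 card_imset; last exact/imset_inj/lift_inj.
case: imsetP => // -[B _ /setP /(_ i)].
by rewrite set11 => /esym /imsetP [z _ /eqP]; rewrite (negbTE (neq_lift _ _)).
Qed.

Local Notation ext s := (lift_perm ord_max ord_max s).

(* Inserts the new point [ord_max] right after [p.1] in its cycle under [p.2]
   (as a new fixed point when [p.1 = ord_max]). *)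
Definition perm_insert (p : 'I_n.+1 * 'S_n) : 'S_n.+1 := tperm p.1 ord_max * ext p.2.

Lemma card_porbits_insert i s :
  #|porbits (perm_insert (i, s))| = (#|porbits s| + (i == ord_max))%N.
Proof.
have := porbits_mul_tperm (ext s) i ord_max.
rewrite /perm_insert /= card_porbits_lift_perm porbit_lift_perm_id in_set1.
case: eqP => [->|_] /=; first by rewrite tperm1 mul1g card_porbits_lift_perm addn1.
by rewrite addn0 -addnn addnA => /addIn; rewrite addn1 => -[].
Qed.

Lemma perm_insert_inj : injective perm_insert.
Proof.
move=> [i s] [j t]; rewrite /perm_insert /= => eq_ins.
have eq_ij : i = j.
  have := congr1 (fun u : 'S_n.+1 => u i) eq_ins.
  rewrite !permM tpermL lift_perm_id => /esym.
  rewrite -[X in _ = X -> _](lift_perm_id ord_max ord_max t).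
  by case: tpermP => [//|-> /perm_inj ->|_ ne_i_max /perm_inj].
case: j / eq_ij t eq_ins => t /mulgI eq_ext; congr (_, _).
apply/permP => x; apply: (@lift_inj _ ord_max).
by rewrite -(lift_perm_lift ord_max ord_max s) -(lift_perm_lift ord_max ord_max t) eq_ext.
Qed.

Lemma perm_insert_bij : bijective perm_insert.
Proof.
apply: inj_card_bij perm_insert_inj _.
by rewrite card_prod !card_Sn card_ord factS.
Qed.

End CycleInsertion.

Lemma sum_porbits_exp (R : comPzSemiRingType) (x : R) n :
  \sum_(s : 'S_n) x ^+ #|porbits s| = \prod_(i < n) (x + i%:R).
Proof.
elim: n => [|n IHn].
  rewrite big_ord0 (eq_bigr (fun=> 1)) ?sumr_const ?card_Sn // => s _.
  suff -> : porbits s = set0 by rewrite cards0.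
  by apply/setP => A; rewrite in_set0; apply/imsetP => -[[]].
rewrite (reindex (@perm_insert n)) /=; last exact/onW_bij/perm_insert_bij.
rewrite -(pair_big xpredT xpredT (fun i s => x ^+ #|porbits (perm_insert (i, s))|)) /=.
rewrite exchange_big big_ord_recr /= -IHn big_distrl /=.
apply: eq_bigr => s _; rewrite big_ord_recr /= card_porbits_insert eqxx addn1.
rewrite (eq_bigr (fun=> x ^+ #|porbits s|)) => [|i _]; last first.
  by rewrite card_porbits_insert -val_eqE /= (ltn_eqF (ltn_ord i)) addn0.
by rewrite sumr_const card_ord exprS mulrDr mulr_natr addrC mulrC.
Qed.

Lemma card_porbits_le n (s : 'S_n) : (#|porbits s| <= n)%N.
Proof. by rewrite -[n in (_ <= n)%N]card_ord leq_imset_card. Qed.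

Lemma prod_add_stirling1 (R : comPzSemiRingType) (x : R) n :
  \prod_(i < n) (x + i%:R) = \sum_(k < n.+1) (stirling1 n k)%:R * x ^+ k.
Proof.
rewrite -sum_porbits_exp.
rewrite (partition_big (fun s : 'S_n => inord #|porbits s| : 'I_n.+1) xpredT) //=.
apply: eq_bigr => k _.
rewrite (eq_bigr (fun=> x ^+ k)) => [|s /eqP <-]; last by rewrite inordK ?ltnS ?card_porbits_le.
rewrite sumr_const mulr_natl; congr (_ *+ _); apply: eq_card => s.
by rewrite unfold_in !inE /= inordK ?ltnS ?card_porbits_le.
Qed.

Section SetPartitions.
Variable T : finType.
Implicit Types (x : T) (B D : {set T}).

Definition npartitions D := #|[set P : {set {set T}} | partition P D]|.

Lemma npartitions_set0 : npartitions set0 = 1%N.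
Proof.
rewrite /npartitions (_ : [set P | _] = [set set0]) ?cards1 //.
by apply/setP => P; rewrite !inE partition_set0.
Qed.

Lemma card_partitions_pblock x B D : x \in B -> B \subset D ->
  #|[set P | partition P D & pblock P x == B]| = npartitions (D :\: B).
Proof.
move=> xB sBD.
have disj_B : [disjoint B & D :\: B] by rewrite disjoint_sym disjoints_subset subsetDr.
have nzB : B != set0 by apply/set0Pn; exists x.
have notin_B Q : partition Q (D :\: B) -> B \notin Q.
  move=> partQ; apply/negP => /(partitionS partQ) /subsetP /(_ x xB).
  by rewrite inE xB.
have partU Q : partition Q (D :\: B) -> partition (B |: Q) D.
  have defD : B :|: (D :\: B) = D by rewrite -{2}(setID D B) (setIidPr sBD).
  by move=> partQ; rewrite -defD partitionU1.
rewrite /npartitions.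
rewrite -(card_in_imset (f := fun Q => B |: Q) (D := [set Q | partition Q (D :\: B)])).
  apply: eq_card => P; rewrite inE; apply/andP/imsetP => [[partP /eqP pblockP]|].
    have BP : B \in P.
      by rewrite -pblockP pblock_mem // (cover_partition partP) (subsetP sBD).
    by exists (P :\ B); rewrite ?inE ?partitionD1 ?setD1K.
  move=> [Q]; rewrite inE => partQ ->; split; first exact: partU.
  by apply/eqP/def_pblock; rewrite ?setU11 ?(partition_trivIset (partU _ partQ)).
move=> Q1 Q2; rewrite !inE => partQ1 partQ2 eqQ.
by rewrite -(setU1K (notin_B _ partQ1)) eqQ setU1K ?notin_B.
Qed.

Lemma npartitions_sum_pblock x D : x \in D ->
  npartitions D = (\sum_(A : {set T} | A \subset D :\ x) npartitions (D :\ x :\: A))%N.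
Proof.
move=> xD; rewrite {1}/npartitions -sum1_card.
rewrite (partition_big (fun P => pblock P x :\ x) (fun A => A \subset D :\ x)) /=; last first.
  move=> P; rewrite inE => partP; apply/setSD/(partitionS partP)/pblock_mem.
  by rewrite (cover_partition partP).
apply: eq_bigr => A sAD.
have xA : x \notin A by apply/negP => /(subsetP sAD); rewrite !inE eqxx.
have sxAD : x |: A \subset D by rewrite subUset sub1set xD (subset_trans sAD) ?subsetDl.
rewrite setDDl -(card_partitions_pblock (setU11 x A) sxAD) -sum1_card.
apply: eq_bigl => P; rewrite !inE; case: (boolP (partition P D)) => //= partP.
have xP : x \in pblock P x by rewrite mem_pblock (cover_partition partP).
by apply/eqP/eqP => [<-|->]; rewrite ?setD1K ?setU1K.
Qed.

End SetPartitions.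

Lemma sum_subsets_card (T : finType) (E : {set T}) (F : nat -> nat) :
  (\sum_(A : {set T} | A \subset E) F #|A| = \sum_(k < #|E|.+1) 'C(#|E|, k) * F k)%N.
Proof.
rewrite (partition_big (fun A : {set T} => inord #|A| : 'I_#|E|.+1) xpredT) //=.
apply: eq_bigr => k _; rewrite -cards_draws -sum_nat_const.
apply: eq_big => [A|A /andP [sAE /eqP <-]]; last by rewrite inordK ?ltnS ?subset_leq_card.
rewrite !inE; case: (boolP (A \subset E)) => //= sAE.
by rewrite -val_eqE /= inordK ?ltnS ?subset_leq_card.
Qed.

Lemma cardsTD1 (T : finType) (x : T) : #|[set: T] :\ x| = #|T|.-1.
Proof. by rewrite -cardsT (cardsD1 x [set: T]) inE. Qed.

Lemma npartitions_rec (T : finType) x (D : {set T}) : x \in D ->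
    (forall E : {set T}, E \subset D :\ x -> npartitions E = bell #|E|) ->
  npartitions D = (\sum_(k < #|D :\ x|.+1) 'C(#|D :\ x|, k) * bell k)%N.
Proof.
move=> xD IH; rewrite (npartitions_sum_pblock xD).
rewrite (eq_bigr (fun A : {set T} => bell (#|D :\ x| - #|A|))) => [|A sA]; last first.
  by rewrite IH ?subsetDl // cardsDS.
rewrite (sum_subsets_card _ (fun k => bell (#|D :\ x| - k))) (reindex_inj rev_ord_inj) /=.
apply: eq_bigr => k _; have le_k : (k <= #|D :\ x|)%N by rewrite -ltnS.
by rewrite subSS bin_sub // subKn.
Qed.

Lemma bell0 : bell 0 = 1%N.
Proof.
rewrite -[bell 0]/(npartitions [set: 'I_0]) -(npartitions_set0 'I_0).
by congr npartitions; apply/setP => -[].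
Qed.

Lemma npartitions_bell (T : finType) (D : {set T}) : npartitions D = bell #|D|.
Proof.
have [m] := ubnP #|D|; elim: m T D => // m IHm T D; rewrite ltnS => leDm.
have [->|[x xD]] := set_0Vmem D; first by rewrite npartitions_set0 cards0 bell0.
have cardD : #|D| = #|D :\ x|.+1 by rewrite (cardsD1 x) xD.
rewrite (npartitions_rec xD) => [|E sE]; last first.
  by apply/IHm/(leq_trans _ leDm); rewrite cardD ltnS subset_leq_card.
rewrite cardD; set k := #|D :\ x|; rewrite -[bell k.+1]/(npartitions [set: 'I_k.+1]).
rewrite (npartitions_rec (x := ord0)) ?inE ?cardsTD1 ?card_ord // => E sE.
apply/IHm/(leq_trans _ leDm); rewrite cardD ltnS (leq_trans (subset_leq_card sE)) //.
by rewrite cardsTD1 card_ord.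
Qed.

Lemma bell_rec m : bell m.+1 = (\sum_(k < m.+1) 'C(m, k) * bell k)%N.
Proof.
rewrite -[bell m.+1]/(npartitions [set: 'I_m.+1]) (npartitions_rec (x := ord0)).
- by rewrite cardsTD1 card_ord.
- by rewrite inE.
- by move=> E _; apply: npartitions_bell.
Qed.

Definition falling_coef n j := ('C(n, j) * n ^_ (n - j))%N.

Lemma falling_coef_fact n j : (falling_coef n j * j`! = 'C(n, j) * n`!)%N.
Proof.
rewrite /falling_coef; have [le_jn|lt_nj] := leqP j n; last by rewrite bin_small.
by rewrite -mulnA -[in _`!](subKn le_jn) ffact_fact ?leq_subr.
Qed.

Lemma falling_coef_small n j : (n < j)%N -> falling_coef n j = 0%N.
Proof. by move=> lt_nj; rewrite /falling_coef bin_small. Qed.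

Lemma falling_coef0 n : falling_coef n 0 = n`!.
Proof. by rewrite /falling_coef bin0 subn0 ffactnn mul1n. Qed.

Lemma falling_coefS n j :
  falling_coef n.+1 j.+1 = (falling_coef n j + (n.+2 + j) * falling_coef n j.+1)%N.
Proof.
apply/eqP; rewrite -(eqn_pmul2r (fact_gt0 j.+1)) mulnDl -mulnA !falling_coef_fact.
rewrite [(j.+1)`!]factS mulnCA falling_coef_fact [(n.+1)`!]factS.
have key : (n.+1 * 'C(n.+1, j.+1) = j.+1 * 'C(n, j) + (n.+2 + j) * 'C(n, j.+1))%N.
  have [le_jn|lt_nj] := leqP j n; last by rewrite !bin_small ?muln0 //; lia.
  have := mul_bin_left n j; rewrite binS; nia.
by rewrite mulnA [('C(_, _) * _)%N]mulnC key mulnDl !mulnA.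
Qed.

Section FallingFactorial.
Variable R : comPzRingType.
Implicit Type x : R.

Definition falling x j := \prod_(i < j) (x - i%:R).

Lemma falling_mul_add x j m :
  falling x j * (x + m%:R) = falling x j.+1 + falling x j *+ (m + j).
Proof.
rewrite /falling big_ord_recr /=; set F := \prod_(i < j) _.
by rewrite -[F *+ _]mulr_natr -mulrDr addnC natrD addrA subrK.
Qed.

Lemma prod_addS_falling x n :
  \prod_(i < n) (x + i.+1%:R) = \sum_(j < n.+1) falling x j *+ falling_coef n j.
Proof.
elim: n => [|n IHn]; first by rewrite big_ord0 big_ord1 falling_coef0 /falling big_ord0.
rewrite big_ord_recr /= IHn mulr_suml.
under [X in X = _]eq_bigr do rewrite mulrnAl falling_mul_add mulrnDl -mulrnA.
rewrite big_split /= [RHS]big_ord_recl.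
under [X in _ = _ + X]eq_bigr do rewrite lift0 falling_coefS mulrnDr.
rewrite big_split /= addrCA; congr (_ + _).
rewrite big_ord_recl big_ord_recr /= (falling_coef_small (ltnSn n)) muln0 mulr0n addr0.
rewrite !falling_coef0 addn0 -factS; congr (_ + _).
by apply: eq_bigr => i _; rewrite /bump leq0n add1n addnS.
Qed.

End FallingFactorial.

Section BellUmbra.
Variable R : comNzRingType.
Implicit Types p q : {poly R}.

Definition bell_umbra p : R := \sum_(i < size p) p`_i * (bell i)%:R.

Lemma bell_umbra_widen N p :
  (size p <= N)%N -> bell_umbra p = \sum_(i < N) p`_i * (bell i)%:R.
Proof.
move=> le_pN; rewrite /bell_umbra (big_ord_widen _ (fun i => p`_i * (bell i)%:R) le_pN).
rewrite big_mkcond; apply: eq_bigr => i _.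
by case: ltnP => // /(nth_default 0) ->; rewrite mul0r.
Qed.

Fact bell_umbra_is_semilinear : semilinear_for *%R bell_umbra.
Proof.
split=> [a p|p q].
  rewrite (bell_umbra_widen (size_scale_leq a p)) /bell_umbra mulr_sumr.
  by apply: eq_bigr => i _; rewrite coefZ mulrA.
rewrite !(bell_umbra_widen (N := maxn (size p) (size q))) ?leq_maxl ?leq_maxr //; last first.
  exact: leq_trans (size_polyD p q) _.
by rewrite -big_split; apply: eq_bigr => i _; rewrite coefD mulrDl.
Qed.

HB.instance Definition _ :=
  GRing.isSemilinear.Build R {poly R} R *%R bell_umbra bell_umbra_is_semilinear.

Lemma bell_umbraXn m : bell_umbra 'X^m = (bell m)%:R.
Proof.
rewrite /bell_umbra size_polyXn big_ord_recr /= coefXn eqxx mul1r big1 ?add0r //.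
by move=> i _; rewrite coefXn (ltn_eqF (ltn_ord i)) mul0r.
Qed.

Lemma bell_umbra_mulX p : bell_umbra ('X * p) = bell_umbra (p \Po ('X + 1)).
Proof.
rewrite -{1}[p]comp_polyXr !comp_polyE mulr_sumr !linear_sum; apply: eq_bigr => i _.
rewrite -scalerAr !linearZ /= -exprS bell_umbraXn exprD1n linear_sum bell_rec natr_sum.
by congr (_ * _); apply: eq_bigr => k _; rewrite raddfMn /= bell_umbraXn natrM mulr_natl.
Qed.

Lemma bell_umbra_falling j : bell_umbra (falling 'X j) = 1.
Proof.
elim: j => [|j IHj]; first by rewrite /falling big_ord0 -(expr0 'X) bell_umbraXn bell0.
rewrite /falling big_ord_recl subr0 bell_umbra_mulX rmorph_prod -IHj.
congr bell_umbra; apply: eq_bigr => i _.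
by rewrite rmorphB /= comp_polyX rmorph_nat /bump leq0n add1n -nat1r opprD addrA addrK.
Qed.

End BellUmbra.

Lemma sum_stirling1_bellS (R : comNzRingType) n :
  ((\sum_(k < n.+1) stirling1 n k * bell k.+1)%N)%:R
  = \sum_(j < n.+1) (falling_coef n j)%:R :> R.
Proof.
transitivity (bell_umbra ('X * \prod_(i < n) ('X + i%:R) : {poly R})).
  rewrite prod_add_stirling1 mulr_sumr linear_sum natr_sum; apply: eq_bigr => k _.
  by rewrite mulrCA -exprS mulr_natl raddfMn /= bell_umbraXn natrM mulr_natl.
rewrite bell_umbra_mulX rmorph_prod /=.
under eq_bigr do rewrite rmorphD /= comp_polyX rmorph_nat -addrA nat1r.
rewrite prod_addS_falling linear_sum; apply: eq_bigr => j _.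
by rewrite raddfMn /= bell_umbra_falling.
Qed.

Lemma fps_mul_geom f n : fps_mul geom f n = \sum_(i < n.+1) f i.
Proof.
rewrite /fps_mul; under eq_bigr do rewrite mul1r -subSS.
by rewrite -(big_mkord xpredT f) big_rev_mkord subn0.
Qed.

Lemma fps_mul_geom_m1 f n : fps_mul geom_m1 f n = \sum_(i < n) f i.
Proof.
rewrite /fps_mul big_ord_recl /= mul0r add0r.
under eq_bigr do rewrite /bump leq0n add1n /= mul1r.
by rewrite -(big_mkord xpredT f) big_rev_mkord subn0.
Qed.

Lemma fps_pow_geom_m1S j m : fps_pow geom_m1 j.+1 m = \sum_(i < m) fps_pow geom_m1 j i.
Proof. exact: fps_mul_geom_m1. Qed.

Lemma fps_pow_geom_m1 j n : fps_pow geom_m1 j.+1 n.+1 = 'C(n, j)%:R.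
Proof.
elim: j n => [|j IHj] n; rewrite fps_pow_geom_m1S big_ord_recl.
  by rewrite big1 ?addr0 ?bin0 // => i _; rewrite lift0.
rewrite fps_pow_geom_m1S big_ord0 add0r.
under eq_bigr do rewrite lift0 IHj.
elim: n => [|n IHn]; first by rewrite big_ord0.
by rewrite big_ord_recr /= IHn binS natrD addrC.
Qed.

Lemma fps_pow_geom_m1_small j m : (m < j)%N -> fps_pow geom_m1 j m = 0.
Proof.
case: j m => [|j] [|m] // lt_mj; first by rewrite fps_pow_geom_m1S big_ord0.
by rewrite fps_pow_geom_m1 bin_small.
Qed.

Lemma aB_sum_falling_coef n : aB n = \sum_(j < n.+1) (falling_coef n j)%:R.
Proof.
have exp_widen m : (m < n.+1)%N ->
    fps_exp geom_m1 m = \sum_(j < n.+1) fps_pow geom_m1 j m / j`!%:R.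
  move=> lt_mn; rewrite /fps_exp.
  rewrite (big_ord_widen n.+1 (fun j => fps_pow geom_m1 j m / j`!%:R)) //.
  rewrite big_mkcond; apply: eq_bigr => j _; case: ltnP => // lt_mj.
  by rewrite fps_pow_geom_m1_small ?mul0r.
rewrite /aB fps_mul_geom; under eq_bigr => m _ do rewrite (exp_widen m (ltn_ord m)).
rewrite exchange_big mulr_sumr; apply: eq_bigr => j _.
rewrite -mulr_suml -fps_pow_geom_m1S fps_pow_geom_m1.
have fact_neq0 : j`!%:R != 0 :> rat by rewrite pnatr_eq0 -lt0n fact_gt0.
by rewrite mulrA -natrM mulnC -falling_coef_fact natrM mulfK.
Qed.

Theorem mainTheorem20 (n : nat) :
  aB n = (((\sum_(k < n.+1) stirling1 n k * bell k.+1)%N)%:R)%R.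
Proof. by rewrite aB_sum_falling_coef sum_stirling1_bellS. Qed.
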